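(* Let $K\subseteq L\subseteq M$ be finite extensions inside $\bar K$. If $M\cap\tilde L=L$ and $[M:L]=r_K(M)/r_K(L)$, then $M/L$ is Galois.
   Context: $K$ is a perfect field with a fixed algebraic closure $\bar K$. For a finite extension $L/K$, $\tilde L$ denotes its Galois closure in $\bar K$. Writing $L=K(\alpha)$ with $f$ the minimal polynomial of $\alpha$ over $K$, the cluster size $r_K(L)$ is the number of roots of $f$ lying in $L$ (independent of the choice of $\alpha$; it equals $|{\rm Aut}(L/K)|$). *)

From HB Require Import structures.
From mathcomp Require Import all_boot all_order all_algebra all_fingroup all_field.
Set Implicit Arguments. Unset Strict Implicit. Unset Printing Implicit Defensive.
Import GRing.Theory.
Local Open Scope ring_scope.

Definition perfect_field (F : fieldType) : Prop :=
  forall p : nat, p \in [pchar F] -> forall x : F, exists y : F, y ^+ p = x.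

(* Ambient field: E is a finite normal (splitting-field) extension of the base
   field F = 1%VS, playing the role of (a large enough finite piece of) the
   algebraic closure.  Subfields of E are the finite extensions of F in E. *)

Definition galois_closure (F : fieldType) (E : splittingFieldType F)
  (L : {subfield E}) : {subfield E} :=
  agenv (\sum_(s in ('Gal({:E} / 1%VS))%g) (s @: L))%VS.

(* In mathcomp, 'Gal(L / 1) is the group of
   automorphisms of L fixing F (restrictions of automorphisms of E mapping L
   onto L; since E/F is normal, every automorphism of L over F arises so). *)
Definition cluster_size (F : fieldType) (E : splittingFieldType F)
  (L : {subfield E}) : nat := #|('Gal(L / 1%VS))%g|.

(* Since F is perfect, E/F is Galois, say with group G.  For an intermediate
   field X, the normaliser N_X of Gal(E/X) in G is the stabiliser of X, and
   restriction maps it onto Aut(X/F) with kernel Gal(E/X); hence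
   |N_X| = r(X) [E:X].  An element of N_M maps L into M and into the Galois
   closure of L, i.e. into M :&: galois_closure L = L, so N_M <= N_L, while the
   degree hypothesis r(M) = [M:L] r(L) gives |N_M| = |N_L|.  Thus N_L = N_M
   normalises Gal(E/M); in particular Gal(E/M) is normal in Gal(E/L). *)

From HB Require Import structures.
From mathcomp Require Import all_boot all_order all_algebra all_fingroup all_field.
From mathcomp Require Import zify.
Set Implicit Arguments. Unset Strict Implicit. Unset Printing Implicit Defensive.
Import GRing.Theory Num.Theory.
Local Open Scope ring_scope.

Section PerfectSeparable.

Variables (F : fieldType) (L : fieldExtType F).
Hypothesis perfF : perfect_field F.

Lemma perfect_mem1_root p a :
  p \in [pchar F] -> a \in 1%VS -> exists2 b : L, b \in 1%VS & b ^+ p = a.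
Proof.
move=> pcharFp /vlineP[k ->]; have [y <-] := perfF pcharFp k.
by exists y%:A; rewrite ?rpredZ ?mem1v // -!in_algE rmorphXn.
Qed.

Lemma polyOver1_comp_Xp_root p (g : {poly L}) :
    p \in [pchar F] -> g \is a polyOver 1%VS ->
  exists2 h, h \is a polyOver 1%VS & h ^+ p = g \Po 'X^p.
Proof.
move=> pcharFp g1.
have pcharLp : p \in [pchar {poly L}].
  by apply: (rmorph_pchar polyC); rewrite (fmorph_pchar (in_alg L)).
have root_coef i : {b : L | b \in 1%VS & b ^+ p = g`_i}.
  by apply: sig2_eqW; apply: perfect_mem1_root; last exact: polyOverP.
pose h := \poly_(i < size g) s2val (root_coef i).
exists h; first by apply/polyOverP => i; rewrite coef_poly; case: ifP => _;
  [case: (root_coef i) | exact: rpred0].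
rewrite -(pFrobenius_autE pcharLp) [h]poly_def rmorph_sum comp_polyE /=.
apply: eq_bigr => i _; rewrite -!mul_polyC rmorphM /= !pFrobenius_autE.
by case: (root_coef i) => b _ /= bp; rewrite -polyC_exp bp -!exprM mulnC.
Qed.

Lemma perfect_separable : separable 1 {:L}.
Proof.
(* An inseparable minimal polynomial g(X^p) would be h^p for some h over 1,
   of smaller degree and still vanishing at x. *)
apply/separableP => x _; apply/negPn/negP => /separablePn_pchar[p pcharLp].
have pcharFp : p \in [pchar F] by rewrite -(fmorph_pchar (in_alg L)).
move=> [g g1 Dg]; have [h h1 Dh] := polyOver1_comp_Xp_root pcharFp g1.
rewrite -Dh in Dg; have p_gt1 := prime_gt1 (pcharf_prime pcharLp).
have h_neq0 : h != 0.
  apply: contra_neq (monic_neq0 (monic_minPoly 1 x)) => h0.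
  by rewrite Dg h0 expr0n gtn_eqF // ltnW.
have h_x : root h x.
  by have := root_minPoly 1 x; rewrite Dg rootE horner_exp expf_eq0 => /andP[].
have le_min_h : (size (minPoly 1 x) <= size h)%N.
  exact: dvdp_leq h_neq0 (minPoly_dvdp h1 h_x).
have /size1_polyC Dh_c : (size h <= 1)%N.
  have := size_exp h p; move: le_min_h; rewrite Dg -!subn1.
  move: (size (h ^+ p)) (size h) => a b; nia.
by move: h_neq0 h_x; rewrite Dh_c polyC_eq0 rootC => /negPf->.
Qed.

End PerfectSeparable.

Lemma perfect_galois (F : fieldType) (E : splittingFieldType F) :
  perfect_field F -> galois 1 {:E}.
Proof. by move=> perfF; rewrite /galois sub1v perfect_separable ?normalFieldf. Qed.

Lemma dimv_tower (F : fieldType) (L : fieldExtType F) (K M E : {subfield L}) :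
  (K <= M <= E)%VS -> \dim_K E = (\dim_K M * \dim_M E)%N.
Proof.
case/andP=> sKM sME; apply/eqP; rewrite -(eqn_pmul2r (adim_gt0 K)).
rewrite -dim_sup_field ?(subv_trans sKM) // mulnAC mulnC -dim_sup_field //.
by rewrite -dim_sup_field.
Qed.

Section GaloisOverBase.

Variables (F : fieldType) (E : splittingFieldType F).
Hypothesis galE : galois 1 {:E}.

Local Notation G := ('Gal({:E} / 1))%g.

Lemma galois_fullv (X : {subfield E}) : galois X {:E}.
Proof. by apply: galoisS galE; rewrite sub1v subvf. Qed.

Lemma fixedField_gal_fullv (X : {subfield E}) : fixedField ('Gal({:E} / X))%g = X.
Proof. exact/galois_fixedField/galois_fullv. Qed.

Lemma gal_fullv_inj (X Y : {subfield E}) :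
  ('Gal({:E} / X) = 'Gal({:E} / Y))%g -> X = Y.
Proof.
by move=> eqXY; apply/val_inj; rewrite /= -fixedField_gal_fullv eqXY fixedField_gal_fullv.
Qed.

Lemma norm_gal_fullvE (X : {subfield E}) (g : gal_of {:E}) :
  (g \in 'N('Gal({:E} / X)))%g = ((g @: X)%VS == X).
Proof.
by apply/normP/eqP => [|gX]; rewrite gal_conjg ?gX // => /gal_fullv_inj/(congr1 val).
Qed.

Lemma fixedField_norm_gal_sub (X : {subfield E}) :
  (fixedField ('N_G('Gal({:E} / X)))%g <= X)%VS.
Proof.
rewrite -{2}fixedField_gal_fullv fixedFieldS // subsetI normG andbT.
by rewrite galS ?sub1v.
Qed.

Lemma gal_fixedField_norm (X : {subfield E}) :
  ('Gal(X / fixedField ('N_G('Gal({:E} / X)))%g) = 'Gal(X / 1))%g.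
Proof.
(* Any automorphism of X extends to E, and the extension stabilises X. *)
apply/eqP; rewrite eqEsubset galS ?sub1v //=; apply/subsetP => x galXx.
have homXx : kHom 1 X x by rewrite -gal_kHom ?sub1v.
have [|y galEy Dy] := kHom_to_gal _ (normalFieldf 1) homXx.
  by rewrite sub1v subvf.
have normXy : y \in ('N_G('Gal({:E} / X)))%g.
  by rewrite inE galEy /= norm_gal_fullvE -(eq_in_limg Dy) limg_gal.
rewrite gal_kHom ?fixedField_norm_gal_sub //; apply/kAHomP => a fixNa.
have [_ fixa] := mem_fixedFieldP fixNa.
by rewrite Dy ?(subvP (fixedField_norm_gal_sub X)) ?fixa.
Qed.

Lemma card_gal_norm (X : {subfield E}) :
  (#|('Gal(X / 1))%g| * #|('Gal({:E} / X))%g|)%N = #|('N_G('Gal({:E} / X)))%g|.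
Proof.
set N := 'N_G('Gal({:E} / X))%G.
(* X is normal over the fixed field of N, so normalField_isog applies. *)
have nsXN : ('Gal({:E} / X) <| 'Gal({:E} / fixedField N))%g.
  by rewrite gal_fixedField /normal subsetIr subsetI galS ?sub1v ?normG.
have /and3P[_ _ nNX] := normal_fixedField_galois (fixedField_galois N) nsXN.
rewrite fixedField_gal_fullv in nNX.
have sNXE : (fixedField N <= X <= {:E})%VS by rewrite fixedField_norm_gal_sub subvf.
have := card_isog (normalField_isog (fixedField_galois N) sNXE nNX).
rewrite /= gal_fixedField_norm gal_fixedField => <-.
by rewrite card_quotient ?subsetIr // mulnC Lagrange // subsetI normG galS ?sub1v.
Qed.

Lemma limg_gal_closure (L : {subfield E}) g :
  g \in G -> (g @: L <= galois_closure L)%VS.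
Proof. by move=> Gg; apply: subv_trans (sub_agenv _); apply: (sumv_sup g). Qed.

Lemma norm_gal_closure_sub (L M : {subfield E}) :
    (L <= M)%VS -> (M :&: galois_closure L)%VS = L ->
  ('N_G('Gal({:E} / M)) \subset 'N_G('Gal({:E} / L)))%g.
Proof.
move=> sLM capL; apply/subsetP => g /setIP[Gg]; rewrite in_setI Gg !norm_gal_fullvE /=.
move=> /eqP gM; rewrite eqEdim limg_dim_eq ?leqnn ?andbT; last first.
  by rewrite (eqP (AEnd_lker0 _)) capv0.
by rewrite -{2}capL subv_cap -{1}gM limgS ?limg_gal_closure.
Qed.

Lemma galois_norm_gal_sub (L M : {subfield E}) :
    (L <= M)%VS -> ('N_G('Gal({:E} / L)) \subset 'N_G('Gal({:E} / M)))%g ->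
  galois L M.
Proof.
move=> sLM sNLM; have nsML : ('Gal({:E} / M) <| 'Gal({:E} / L))%g.
  rewrite /normal galS //; apply: subset_trans (subsetIr G _).
  by apply: subset_trans sNLM; rewrite subsetI galS ?sub1v ?normG.
by have := normal_fixedField_galois (galois_fullv L) nsML; rewrite fixedField_gal_fullv.
Qed.

Lemma card_norm_gal_tower (L M : {subfield E}) :
    (L <= M)%VS -> (\dim_L M * #|('Gal(L / 1))%g|)%N = #|('Gal(M / 1))%g| ->
  #|('N_G('Gal({:E} / L)))%g| = #|('N_G('Gal({:E} / M)))%g|.
Proof.
move=> sLM dimLM; rewrite -!card_gal_norm.
rewrite -(galois_dim (galois_fullv L)) -(galois_dim (galois_fullv M)).
by rewrite (@dimv_tower _ _ L M) ?sLM ?subvf // -dimLM mulnCA mulnA.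
Qed.

End GaloisOverBase.

Theorem theorem6p18 (F : fieldType) (E : splittingFieldType F)
  (L M : {subfield E}) :
  perfect_field F ->
  (L <= M)%VS ->
  (M :&: galois_closure L)%VS = L ->
  ((\dim_L M)%:R : rat) = (cluster_size M)%:R / (cluster_size L)%:R ->
  galois L M.
Proof.
move=> perfF sLM capL dimLM; have galE := perfect_galois E perfF.
have cardLM : (\dim_L M * cluster_size L)%N = cluster_size M.
  apply/eqP; rewrite -(eqr_nat rat) natrM dimLM divfK // pnatr_eq0 -lt0n.
  exact: cardG_gt0.
have cardN := card_norm_gal_tower galE sLM cardLM.
have /(subset_cardP (esym cardN))/setP eqN := norm_gal_closure_sub galE sLM capL.
by apply: (galois_norm_gal_sub galE sLM); rewrite eqN.
Qed.
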